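(* Let $\beta_2,\beta_3,\delta_1,\delta_2,\delta_3,\mu_1,\mu_2,\eta,K_1,K_2,K_3$ be positive real numbers and consider the system of ordinary differential equations \[ \begin{aligned} \dot{H} &= - \delta_1 H - \eta SH + \mu_1C\left(1-\frac{H}{K_1}\right), \\ \dot{S} &= \beta_2 S \left(1-\frac{S}{K_2}\right) - \delta_2 S - \eta S H + \mu_2 C \left(1-\frac{S}{K_2}\right), \\ \dot{C} &= \beta_3 C \left(1-\frac{C}{K_3}\right) - \delta_3 C + \eta S H \end{aligned} \] on $\mathbb{R}^3$. Let \[ \tilde{K}_3 := \frac{1}{2} \left( \frac{\beta_3 - \delta_3}{\beta_3} K_3 + \sqrt{\left(\frac{\beta_3-\delta_3}{\beta_3}\right)^2 K_3^2 + 8\frac{\eta}{\beta_3} K_1 K_2K_3} \right) \] and $D=[0, K_1] \times [0, K_2] \times [0, \tilde{K}_3]$. Then $D$ is positively invariant under this system, i.e.\ every solution $(H,S,C)(t)$ with $(H,S,C)(0)\in D$ satisfies $(H,S,C)(t)\in D$ for all $t\ge 0$ in its interval of existence.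
   Context: The system is a population model (mycobiont host $H$, photobiont symbiont $S$, lichen complex $C$) in which all parameters are birth, death, formation rates and carrying capacities. *)

From Stdlib Require Import Reals Lra.
Open Scope R_scope.

Definition fH (d1 eta m1 K1 : R) (H S C : R) : R :=
  - d1 * H - eta * S * H + m1 * C * (1 - H / K1).

Definition fS (b2 d2 eta m2 K2 : R) (H S C : R) : R :=
  b2 * S * (1 - S / K2) - d2 * S - eta * S * H + m2 * C * (1 - S / K2).

Definition fC (b3 d3 eta K3 : R) (H S C : R) : R :=
  b3 * C * (1 - C / K3) - d3 * C + eta * S * H.

Definition Ktilde3 (b3 d3 eta K1 K2 K3 : R) : R :=
  / 2 * ((b3 - d3) / b3 * K3
         + sqrt (((b3 - d3) / b3) ^ 2 * K3 ^ 2 + 8 * (eta / b3) * K1 * K2 * K3)).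

Definition inD (K1 K2 Kt3 : R) (h s c : R) : Prop :=
  0 <= h <= K1 /\ 0 <= s <= K2 /\ 0 <= c <= Kt3.

(* Measure how far a state lies outside the box D by the penalty
   P = sum over the six faces of (negative part of the gap to the face)^2,
   which is C^1 along solutions and vanishes exactly on D.  On a violated face
   the vector field points inward up to an error proportional to the total
   violation of the constraints, since every term that could push the state
   further out carries a factor that is itself a violated gap.  On the face
   C = Ktilde3 this is where the constant comes from: beyond Ktilde3 the net
   logistic decay of C outweighs twice the maximal formation rate
   eta * K1 * K2.  Hence P' <= L P on every compact time interval, with L
   depending on a bound of the solution there, and Gronwall's inequality turns
   P(0) = 0 into P(t) = 0. *)

From Stdlib Require Import Reals Lra Lia List.
Import ListNotations.
Open Scope R_scope.

Definition negpart (x : R) : R := Rmax (- x) 0.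

Lemma negpart_ge0 x : 0 <= negpart x.
Proof. apply Rmax_r. Qed.

Lemma negpart_ge_opp x : - x <= negpart x.
Proof. apply Rmax_l. Qed.

Lemma negpart_eq0 x : 0 <= x -> negpart x = 0.
Proof. intro; unfold negpart; apply Rmax_right; lra. Qed.

Lemma negpart_eq_opp x : x <= 0 -> negpart x = - x.
Proof. intro; unfold negpart; apply Rmax_left; lra. Qed.

Lemma negpart_sqr_remainder x y :
  Rabs (negpart y ^ 2 - negpart x ^ 2 + 2 * negpart x * (y - x)) <= (y - x) ^ 2.
Proof.
  apply Rabs_le.
  destruct (Rle_dec x 0), (Rle_dec y 0);
    rewrite ?(negpart_eq_opp x), ?(negpart_eq0 x), ?(negpart_eq_opp y), ?(negpart_eq0 y)
      by lra; split; try nra; pose proof (pow2_ge_0 (y - x)); nra.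
Qed.

Lemma derivable_pt_lim_negpart_sqr x :
  derivable_pt_lim (fun y => negpart y ^ 2) x (- 2 * negpart x).
Proof.
  intros eps Heps; exists (mkposreal eps Heps); intros h Hh0 Hh; simpl in Hh.
  pose proof (negpart_sqr_remainder x (x + h)) as Hrem.
  replace (x + h - x) with h in Hrem by ring.
  replace ((negpart (x + h) ^ 2 - negpart x ^ 2) / h - - 2 * negpart x)
    with ((negpart (x + h) ^ 2 - negpart x ^ 2 + 2 * negpart x * h) / h)
    by (field; exact Hh0).
  unfold Rdiv; rewrite Rabs_mult, Rabs_inv.
  apply Rle_lt_trans with (Rabs h); [|exact Hh].
  pose proof (Rabs_pos_lt h Hh0).
  rewrite <- (Rabs_right (h ^ 2)), <- RPow_abs in Hrem by (apply Rle_ge, pow2_ge_0).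
  apply (Rmult_le_reg_r (Rabs h)); [lra|].
  rewrite Rmult_assoc, Rinv_l by lra. nra.
Qed.

Lemma derivable_pt_lim_comp_negpart_sqr f t l :
  derivable_pt_lim f t l ->
  derivable_pt_lim (fun u => negpart (f u) ^ 2) t (- 2 * negpart (f t) * l).
Proof.
  intro Hf; exact (derivable_pt_lim_comp f _ t l _ Hf (derivable_pt_lim_negpart_sqr _)).
Qed.

Lemma Gronwall_nonpos (V V' : R -> R) (L a b : R) :
  a < b ->
  (forall u, a <= u <= b -> derivable_pt_lim V u (V' u)) ->
  (forall u, a <= u <= b -> V' u <= L * V u) ->
  V a <= 0 -> V b <= 0.
Proof.
  intros Hab HV Hgrowth Ha.
  set (W := fun u => V u * exp (- L * u)).
  destruct (MVT_cor2 W (fun u => (V' u - L * V u) * exp (- L * u)) a b Hab)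
    as [c [HW Hc]].
  - intros u Hu.
    replace ((V' u - L * V u) * exp (- L * u))
      with (V' u * exp (- L * u) + V u * (exp (- L * u) * (- L))) by ring.
    apply (derivable_pt_lim_mult V (fun u => exp (- L * u))); [exact (HV u Hu)|].
    assert (Hlin : derivable_pt_lim (fun u => - L * u) u (- L * 1))
      by exact (derivable_pt_lim_scal id (- L) u 1 (derivable_pt_lim_id u)).
    rewrite Rmult_1_r in Hlin.
    exact (derivable_pt_lim_comp _ exp u _ _ Hlin (derivable_pt_lim_exp _)).
  - assert (Hdecr : W b <= W a).
    { assert ((V' c - L * V c) * exp (- L * c) <= 0).
      { pose proof (Hgrowth c ltac:(lra)); pose proof (exp_pos (- L * c)). nra. }
      nra. }
    unfold W in Hdecr.
    pose proof (exp_pos (- L * a)); pose proof (exp_pos (- L * b)). nra.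
Qed.

Lemma sum_sqr_le (l : list R) :
  fold_right Rplus 0 l ^ 2 <= INR (length l) * fold_right Rplus 0 (map (fun x => x ^ 2) l).
Proof.
  induction l as [|x l IH]; [simpl; lra|].
  destruct l as [|y l]; [simpl; lra|].
  change (length (x :: y :: l)) with (S (length (y :: l))); rewrite S_INR.
  change (fold_right Rplus 0 (x :: y :: l)) with (x + fold_right Rplus 0 (y :: l)).
  change (map (fun x => x ^ 2) (x :: y :: l)) with (x ^ 2 :: map (fun x => x ^ 2) (y :: l)).
  change (fold_right Rplus 0 (x ^ 2 :: ?r)) with (x ^ 2 + fold_right Rplus 0 r).
  assert (Hn : 0 < INR (length (y :: l))) by (apply lt_0_INR; simpl; lia).
  revert IH Hn.
  generalize (fold_right Rplus 0 (y :: l)) (fold_right Rplus 0 (map (fun x => x ^ 2) (y :: l)))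
    (INR (length (y :: l))); intros s q n IH Hn.
  assert (Hcross : 2 * x * s <= n * x ^ 2 + q).
  { pose proof (pow2_ge_0 (n * x - s)).
    apply (Rmult_le_reg_l n); nra. }
  nra.
Qed.

Lemma derivable_bounded_on_segment (f f' : R -> R) a b c d :
  a < c -> c <= d -> d < b -> (forall u, a < u < b -> derivable_pt_lim f u (f' u)) ->
  exists M, forall u, c <= u <= d -> - M <= f u <= M.
Proof.
  intros Hac Hcd Hdb Hf.
  destruct (continuity_ab_maj (fun u => Rabs (f u)) c d Hcd) as [x [Hmax _]].
  { intros u Hu; apply (continuity_pt_comp f Rabs); [| apply Rcontinuity_abs].
    apply derivable_continuous_pt; exists (f' u); apply Hf; lra. }
  exists (Rabs (f x)); intros u Hu.
  pose proof (Hmax u Hu); pose proof (Rle_abs (f u)); pose proof (Rle_abs (- f u)).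
  rewrite Rabs_Ropp in *; lra.
Qed.

Lemma negpart_mul_le g d B : 0 <= B -> (g <= 0 -> - B <= d) -> - (negpart g * d) <= B * negpart g.
Proof.
  intros HB Hg; destruct (Rle_dec g 0) as [Hle|Hgt].
  - rewrite negpart_eq_opp by exact Hle; specialize (Hg Hle); nra.
  - rewrite negpart_eq0 by lra; lra.
Qed.

Definition box_gaps (K1 K2 K3 h s c : R) : list R := [h; K1 - h; s; K2 - s; c; K3 - c].

Definition box_excess (K1 K2 K3 h s c : R) : R :=
  fold_right Rplus 0 (map negpart (box_gaps K1 K2 K3 h s c)).

Definition box_penalty (K1 K2 K3 h s c : R) : R :=
  fold_right Rplus 0 (map (fun g => negpart g ^ 2) (box_gaps K1 K2 K3 h s c)).

Definition box_penalty_rate (K1 K2 K3 h s c dh ds dc : R) : R :=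
  - 2 * (negpart h * dh - negpart (K1 - h) * dh + negpart s * ds - negpart (K2 - s) * ds
         + negpart c * dc - negpart (K3 - c) * dc).

Lemma box_penalty_le0_iff_inD K1 K2 K3 h s c :
  box_penalty K1 K2 K3 h s c <= 0 <-> inD K1 K2 K3 h s c.
Proof.
  unfold box_penalty, inD; simpl; split.
  - intro HP.
    assert (Hgap : forall g, negpart g ^ 2 <= 0 -> 0 <= g).
    { intros g Hg; pose proof (negpart_ge_opp g); pose proof (negpart_ge0 g); nra. }
    pose proof (pow2_ge_0 (negpart h)); pose proof (pow2_ge_0 (negpart (K1 - h)));
    pose proof (pow2_ge_0 (negpart s)); pose proof (pow2_ge_0 (negpart (K2 - s)));
    pose proof (pow2_ge_0 (negpart c)); pose proof (pow2_ge_0 (negpart (K3 - c))).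
    pose proof (Hgap h); pose proof (Hgap (K1 - h)); pose proof (Hgap s);
    pose proof (Hgap (K2 - s)); pose proof (Hgap c); pose proof (Hgap (K3 - c)).
    repeat split; lra.
  - intros (Hh & Hs & Hc).
    rewrite !negpart_eq0 by lra; lra.
Qed.

Lemma box_excess_sqr_le K1 K2 K3 h s c :
  box_excess K1 K2 K3 h s c ^ 2 <= 6 * box_penalty K1 K2 K3 h s c.
Proof.
  pose proof (sum_sqr_le (map negpart (box_gaps K1 K2 K3 h s c))) as Hcs.
  rewrite map_map, length_map in Hcs.
  replace (INR (length (box_gaps K1 K2 K3 h s c))) with 6 in Hcs by (simpl; lra).
  exact Hcs.
Qed.

Lemma derivable_pt_lim_box_penalty K1 K2 K3 (h s c : R -> R) t dh ds dc :
  derivable_pt_lim h t dh -> derivable_pt_lim s t ds -> derivable_pt_lim c t dc ->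
  derivable_pt_lim (fun u => box_penalty K1 K2 K3 (h u) (s u) (c u)) t
    (box_penalty_rate K1 K2 K3 (h t) (s t) (c t) dh ds dc).
Proof.
  intros Hh Hs Hc.
  assert (Hgap : forall K f df, derivable_pt_lim f t df ->
            derivable_pt_lim (fun u => K - f u) t (- df)).
  { intros K f df Hf; replace (- df) with (0 - df) by ring.
    exact (derivable_pt_lim_minus (fct_cte K) f t 0 df (derivable_pt_lim_const K t) Hf). }
  assert (Hsum : forall f g df dg, derivable_pt_lim f t df -> derivable_pt_lim g t dg ->
            derivable_pt_lim (fun u => f u + g u) t (df + dg))
    by (intros; apply derivable_pt_lim_plus; assumption).
  replace (box_penalty_rate K1 K2 K3 (h t) (s t) (c t) dh ds dc) with
    (- 2 * negpart (h t) * dh + (- 2 * negpart (K1 - h t) * (- dh)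
     + (- 2 * negpart (s t) * ds + (- 2 * negpart (K2 - s t) * (- ds)
     + (- 2 * negpart (c t) * dc + (- 2 * negpart (K3 - c t) * (- dc) + 0))))))
    by (unfold box_penalty_rate; ring).
  unfold box_penalty; simpl.
  repeat apply Hsum; try apply derivable_pt_lim_const.
  - exact (derivable_pt_lim_comp_negpart_sqr h t dh Hh).
  - exact (derivable_pt_lim_comp_negpart_sqr _ t _ (Hgap K1 h dh Hh)).
  - exact (derivable_pt_lim_comp_negpart_sqr s t ds Hs).
  - exact (derivable_pt_lim_comp_negpart_sqr _ t _ (Hgap K2 s ds Hs)).
  - exact (derivable_pt_lim_comp_negpart_sqr c t dc Hc).
  - exact (derivable_pt_lim_comp_negpart_sqr _ t _ (Hgap K3 c dc Hc)).
Qed.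

Section BoxPenaltyGrowth.
Variables K1 K2 K3 h s c dh ds dc L : R.
Hypothesis HL : 0 <= L.
Let E := box_excess K1 K2 K3 h s c.
Hypotheses (Hh : h <= 0 -> - (L * E) <= dh) (HK1h : K1 - h <= 0 -> - (L * E) <= - dh)
  (Hs : s <= 0 -> - (L * E) <= ds) (HK2s : K2 - s <= 0 -> - (L * E) <= - ds)
  (Hc : c <= 0 -> - (L * E) <= dc) (HK3c : K3 - c <= 0 -> - (L * E) <= - dc).

(* Each violated face contributes at most [L E] times its own violation, so the
   rate is at most [2 L E^2], and [E^2 <= 6 P] by Cauchy-Schwarz. *)
Lemma box_penalty_rate_le :
  box_penalty_rate K1 K2 K3 h s c dh ds dc <= 12 * L * box_penalty K1 K2 K3 h s c.
Proof.
  assert (HE : 0 <= E)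
    by (unfold E, box_excess; simpl; pose proof (negpart_ge0 h); pose proof (negpart_ge0 (K1 - h));
        pose proof (negpart_ge0 s); pose proof (negpart_ge0 (K2 - s));
        pose proof (negpart_ge0 c); pose proof (negpart_ge0 (K3 - c)); lra).
  assert (HB : 0 <= L * E) by (apply Rmult_le_pos; assumption).
  pose proof (negpart_mul_le _ _ _ HB Hh); pose proof (negpart_mul_le _ _ _ HB HK1h);
  pose proof (negpart_mul_le _ _ _ HB Hs); pose proof (negpart_mul_le _ _ _ HB HK2s);
  pose proof (negpart_mul_le _ _ _ HB Hc); pose proof (negpart_mul_le _ _ _ HB HK3c).
  assert (Hrate : box_penalty_rate K1 K2 K3 h s c dh ds dc <= 2 * L * E ^ 2).
  { unfold box_penalty_rate; replace (E ^ 2) with (E * box_excess K1 K2 K3 h s c) by (unfold E; ring).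
    unfold box_excess; simpl; nra. }
  pose proof (box_excess_sqr_le K1 K2 K3 h s c) as Hcs; fold E in Hcs.
  nra.
Qed.
End BoxPenaltyGrowth.

Lemma mul_negpart_lower y x M : 0 <= x <= M -> - (M * negpart y) <= y * x.
Proof.
  intro Hx; destruct (Rle_dec 0 y).
  - rewrite negpart_eq0 by lra; nra.
  - rewrite negpart_eq_opp by lra; nra.
Qed.

Lemma mul_negparts_lower x y M :
  -M <= x <= M -> -M <= y <= M -> - (M * (negpart x + negpart y)) <= x * y.
Proof.
  intros Hx Hy; destruct (Rle_dec 0 x), (Rle_dec 0 y);
    rewrite ?(negpart_eq0 x), ?(negpart_eq_opp x), ?(negpart_eq0 y), ?(negpart_eq_opp y)
      by lra; nra.
Qed.

Lemma logistic_factor_bounds x K M : 0 < K -> -M <= x <= 0 -> 1 <= 1 - x / K <= 1 + M / K.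
Proof.
  intros HK Hx; pose proof (Rinv_0_lt_compat K HK); unfold Rdiv; split; [nra|].
  assert (0 <= (x + M) * / K) by (apply Rmult_le_pos; lra). lra.
Qed.

Lemma logistic_nonpos_beyond_Ktilde3 b3 d3 eta K1 K2 K3 x :
  0 < b3 -> 0 <= eta * K1 * K2 -> 0 < K3 -> Ktilde3 b3 d3 eta K1 K2 K3 <= x ->
  b3 * x * (1 - x / K3) - d3 * x + 2 * (eta * K1 * K2) <= 0.
Proof.
  intros Hb3 Hprod HK3 Hx; unfold Ktilde3 in Hx.
  set (r := (b3 - d3) / b3 * K3) in *.
  set (e := eta / b3 * K1 * K2 * K3).
  assert (He : 0 <= e).
  { unfold e; replace (eta / b3 * K1 * K2 * K3) with (eta * K1 * K2 * (K3 / b3)) by (field; lra).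
    apply Rmult_le_pos; [lra | apply Rle_mult_inv_pos; lra]. }
  replace (((b3 - d3) / b3) ^ 2 * K3 ^ 2 + 8 * (eta / b3) * K1 * K2 * K3)
    with (r ^ 2 + 8 * e) in Hx by (unfold r, e; ring).
  assert (HD : 0 <= r ^ 2 + 8 * e) by nra.
  pose proof (sqrt_sqrt _ HD) as Hsq; pose proof (sqrt_pos (r ^ 2 + 8 * e)).
  set (sigma := sqrt (r ^ 2 + 8 * e)) in *.
  (* [x] lies beyond the larger root [(r + sigma) / 2] of [x^2 - r x - 2 e]. *)
  assert (Hquad : 0 <= x ^ 2 - r * x - 2 * e).
  { replace (x ^ 2 - r * x - 2 * e) with ((x - / 2 * (r + sigma)) * (x - / 2 * (r + sigma) + sigma))
      by nra.
    apply Rmult_le_pos; lra. }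
  replace (b3 * x * (1 - x / K3) - d3 * x + 2 * (eta * K1 * K2))
    with (- (b3 / K3) * (x ^ 2 - r * x - 2 * e)) by (unfold r, e; field; lra).
  assert (0 <= b3 / K3 * (x ^ 2 - r * x - 2 * e))
    by (apply Rmult_le_pos; [apply Rle_mult_inv_pos|]; lra).
  lra.
Qed.

Lemma mul_le_corner_product h s K1 K2 M :
  0 < K1 -> 0 < K2 -> K1 <= M -> K2 <= M -> -M <= h <= M -> -M <= s <= M ->
  s * h <= K1 * K2 + M * (negpart h + negpart (K1 - h) + negpart s + negpart (K2 - s)).
Proof.
  intros.
  destruct (Rle_dec 0 h), (Rle_dec 0 (K1 - h)), (Rle_dec 0 s), (Rle_dec 0 (K2 - s));
    rewrite ?(negpart_eq0 h), ?(negpart_eq_opp h), ?(negpart_eq0 (K1 - h)),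
      ?(negpart_eq_opp (K1 - h)), ?(negpart_eq0 s), ?(negpart_eq_opp s),
      ?(negpart_eq0 (K2 - s)), ?(negpart_eq_opp (K2 - s)) by lra; nra.
Qed.

Lemma lower_bound_weaken k p L E d :
  0 <= k <= L -> 0 <= p <= E -> - (k * p) <= d -> - (L * E) <= d.
Proof. intros; nra. Qed.

Section LichenField.
Variables b2 b3 d1 d2 d3 m1 m2 eta K1 K2 K3 : R.
Hypotheses (hb2 : 0 < b2) (hb3 : 0 < b3) (hd1 : 0 < d1) (hd2 : 0 < d2) (hd3 : 0 < d3)
  (hm1 : 0 < m1) (hm2 : 0 < m2) (heta : 0 < eta)
  (hK1 : 0 < K1) (hK2 : 0 < K2) (hK3 : 0 < K3).
Variables M h s c : R.
Hypotheses (hMh : -M <= h <= M) (hMs : -M <= s <= M) (hMc : -M <= c <= M).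

Lemma fH_face_lower : h <= 0 ->
  - ((eta * M + m1 * (1 + M / K1)) * (negpart h + negpart c)) <= fH d1 eta m1 K1 h s c.
Proof.
  intro Hh; unfold fH; rewrite negpart_eq_opp by exact Hh.
  pose proof (logistic_factor_bounds h K1 M hK1 ltac:(lra)) as HA.
  pose proof (mul_negpart_lower c (1 - h / K1) (1 + M / K1) ltac:(lra)) as Hc.
  pose proof (negpart_ge0 c).
  assert (0 <= eta * (s + M) * - h) by (repeat apply Rmult_le_pos; lra).
  assert (0 <= eta * M * negpart c) by (repeat apply Rmult_le_pos; lra).
  assert (0 <= m1 * (1 + M / K1) * - h) by (repeat apply Rmult_le_pos; lra).
  assert (0 <= d1 * - h) by (repeat apply Rmult_le_pos; lra).
  assert (m1 * - ((1 + M / K1) * negpart c) <= m1 * (c * (1 - h / K1)))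
    by (apply Rmult_le_compat_l; lra).
  lra.
Qed.

Lemma fH_face_upper : K1 - h <= 0 ->
  - ((eta * M + m1 * (M / K1)) * (negpart (K1 - h) + negpart s)) <= - fH d1 eta m1 K1 h s c.
Proof.
  intro Hh; unfold fH; rewrite negpart_eq_opp by exact Hh.
  pose proof (mul_negpart_lower s h M ltac:(lra)) as Hs.
  pose proof (negpart_ge0 s).
  assert (E : 1 - h / K1 = - ((h - K1) / K1)) by (field; lra).
  rewrite E.
  pose proof (Rinv_0_lt_compat K1 hK1).
  assert (0 <= m1 / K1 * (c + M) * (h - K1)) by (repeat apply Rmult_le_pos; lra).
  assert (0 <= eta * M * - (K1 - h)) by (repeat apply Rmult_le_pos; lra).
  assert (0 <= m1 * (M / K1) * negpart s) by (repeat apply Rmult_le_pos; lra).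
  assert (0 <= d1 * h) by (repeat apply Rmult_le_pos; lra).
  assert (eta * - (M * negpart s) <= eta * (s * h)) by (apply Rmult_le_compat_l; lra).
  lra.
Qed.

Lemma fS_face_lower : s <= 0 ->
  - ((b2 * (1 + M / K2) + eta * M + m2 * (1 + M / K2)) * (negpart s + negpart c))
    <= fS b2 d2 eta m2 K2 h s c.
Proof.
  intro Hs; unfold fS; rewrite negpart_eq_opp by exact Hs.
  pose proof (logistic_factor_bounds s K2 M hK2 ltac:(lra)) as HA.
  pose proof (mul_negpart_lower c (1 - s / K2) (1 + M / K2) ltac:(lra)) as Hc.
  pose proof (negpart_ge0 c).
  assert (0 <= b2 * - s * (1 + M / K2 - (1 - s / K2))) by (repeat apply Rmult_le_pos; lra).
  assert (0 <= eta * (h + M) * - s) by (repeat apply Rmult_le_pos; lra).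
  assert (0 <= (b2 * (1 + M / K2) + eta * M) * negpart c) by (repeat apply Rmult_le_pos; nra).
  assert (0 <= m2 * (1 + M / K2) * - s) by (repeat apply Rmult_le_pos; lra).
  assert (0 <= d2 * - s) by (repeat apply Rmult_le_pos; lra).
  assert (m2 * - ((1 + M / K2) * negpart c) <= m2 * (c * (1 - s / K2)))
    by (apply Rmult_le_compat_l; lra).
  lra.
Qed.

Lemma fS_face_upper : K2 - s <= 0 ->
  - ((eta * M + m2 * (M / K2)) * (negpart (K2 - s) + negpart h)) <= - fS b2 d2 eta m2 K2 h s c.
Proof.
  intro Hs; unfold fS; rewrite negpart_eq_opp by exact Hs.
  pose proof (mul_negpart_lower h s M ltac:(lra)) as Hh.
  pose proof (negpart_ge0 h).
  assert (E : 1 - s / K2 = - ((s - K2) / K2)) by (field; lra).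
  rewrite E.
  pose proof (Rinv_0_lt_compat K2 hK2).
  assert (0 <= m2 / K2 * (c + M) * (s - K2)) by (repeat apply Rmult_le_pos; lra).
  assert (0 <= b2 / K2 * s * (s - K2)) by (repeat apply Rmult_le_pos; lra).
  assert (0 <= eta * M * - (K2 - s)) by (repeat apply Rmult_le_pos; lra).
  assert (0 <= m2 * (M / K2) * negpart h) by (repeat apply Rmult_le_pos; lra).
  assert (0 <= d2 * s) by (repeat apply Rmult_le_pos; lra).
  assert (eta * - (M * negpart h) <= eta * (h * s)) by (apply Rmult_le_compat_l; lra).
  lra.
Qed.

Lemma fC_face_lower : c <= 0 ->
  - ((b3 * (1 + M / K3) + eta * M) * (negpart c + (negpart s + negpart h)))
    <= fC b3 d3 eta K3 h s c.
Proof.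
  intro Hc; unfold fC; rewrite negpart_eq_opp by exact Hc.
  pose proof (logistic_factor_bounds c K3 M hK3 ltac:(lra)) as HA.
  pose proof (mul_negparts_lower s h M hMs hMh) as Hsh.
  pose proof (negpart_ge0 s); pose proof (negpart_ge0 h).
  assert (0 <= b3 * - c * (1 + M / K3 - (1 - c / K3))) by (repeat apply Rmult_le_pos; lra).
  assert (0 <= b3 * (1 + M / K3) * (negpart s + negpart h)) by (repeat apply Rmult_le_pos; lra).
  assert (0 <= eta * M * - c) by (repeat apply Rmult_le_pos; lra).
  assert (0 <= d3 * - c) by (repeat apply Rmult_le_pos; lra).
  assert (eta * - (M * (negpart s + negpart h)) <= eta * (s * h))
    by (apply Rmult_le_compat_l; lra).
  lra.
Qed.

Hypotheses (hK1M : K1 <= M) (hK2M : K2 <= M).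

Lemma fC_face_upper : Ktilde3 b3 d3 eta K1 K2 K3 - c <= 0 ->
  - (eta * M * (negpart h + negpart (K1 - h) + negpart s + negpart (K2 - s)))
    <= - fC b3 d3 eta K3 h s c.
Proof.
  intro Hc; unfold fC.
  assert (HK12 : 0 <= eta * K1 * K2) by (repeat apply Rmult_le_pos; lra).
  pose proof (logistic_nonpos_beyond_Ktilde3 b3 d3 eta K1 K2 K3 c hb3 HK12 hK3 ltac:(lra)).
  pose proof (mul_le_corner_product h s K1 K2 M hK1 hK2 hK1M hK2M hMh hMs) as Hsh.
  assert (eta * (s * h) <= eta * (K1 * K2 + M * (negpart h + negpart (K1 - h)
            + negpart s + negpart (K2 - s)))) by (apply Rmult_le_compat_l; lra).
  lra.
Qed.

Definition lichen_rate_bound : R :=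
  eta * M + b2 * (1 + M / K2) + b3 * (1 + M / K3) + m1 * (1 + M / K1) + m2 * (1 + M / K2).

Lemma lichen_penalty_rate_le :
  box_penalty_rate K1 K2 (Ktilde3 b3 d3 eta K1 K2 K3) h s c
    (fH d1 eta m1 K1 h s c) (fS b2 d2 eta m2 K2 h s c) (fC b3 d3 eta K3 h s c)
  <= 12 * lichen_rate_bound * box_penalty K1 K2 (Ktilde3 b3 d3 eta K1 K2 K3) h s c.
Proof.
  set (Kt := Ktilde3 b3 d3 eta K1 K2 K3).
  assert (HM : 0 <= M) by lra.
  assert (0 <= M / K1) by (apply Rle_mult_inv_pos; lra).
  assert (0 <= M / K2) by (apply Rle_mult_inv_pos; lra).
  assert (0 <= M / K3) by (apply Rle_mult_inv_pos; lra).
  assert (0 <= eta * M) by (apply Rmult_le_pos; lra).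
  assert (0 <= b2 * (1 + M / K2)) by (apply Rmult_le_pos; lra).
  assert (0 <= b3 * (1 + M / K3)) by (apply Rmult_le_pos; lra).
  assert (0 <= m1 * (M / K1)) by (apply Rmult_le_pos; lra).
  assert (0 <= m2 * (M / K2)) by (apply Rmult_le_pos; lra).
  pose proof (negpart_ge0 h); pose proof (negpart_ge0 (K1 - h));
  pose proof (negpart_ge0 s); pose proof (negpart_ge0 (K2 - s));
  pose proof (negpart_ge0 c); pose proof (negpart_ge0 (Kt - c)).
  apply box_penalty_rate_le; unfold lichen_rate_bound, box_excess; simpl.
  - unfold lichen_rate_bound; lra.
  - intro Hface; eapply lower_bound_weaken; [| | exact (fH_face_lower Hface)]; split; lra.
  - intro Hface; eapply lower_bound_weaken; [| | exact (fH_face_upper Hface)]; split; lra.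
  - intro Hface; eapply lower_bound_weaken; [| | exact (fS_face_lower Hface)]; split; lra.
  - intro Hface; eapply lower_bound_weaken; [| | exact (fS_face_upper Hface)]; split; lra.
  - intro Hface; eapply lower_bound_weaken; [| | exact (fC_face_lower Hface)]; split; lra.
  - intro Hface; eapply lower_bound_weaken; [| | exact (fC_face_upper Hface)]; split; lra.
Qed.
End LichenField.

Theorem theorem1
  (b2 b3 d1 d2 d3 m1 m2 eta K1 K2 K3 : R)
  (hb2 : 0 < b2) (hb3 : 0 < b3) (hd1 : 0 < d1) (hd2 : 0 < d2) (hd3 : 0 < d3)
  (hm1 : 0 < m1) (hm2 : 0 < m2) (heta : 0 < eta)
  (hK1 : 0 < K1) (hK2 : 0 < K2) (hK3 : 0 < K3)
  (H S C : R -> R) (a b : R) (ha : a < 0) (hb : 0 < b)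
  (hode : forall t, a < t < b ->
     derivable_pt_lim H t (fH d1 eta m1 K1 (H t) (S t) (C t)) /\
     derivable_pt_lim S t (fS b2 d2 eta m2 K2 (H t) (S t) (C t)) /\
     derivable_pt_lim C t (fC b3 d3 eta K3 (H t) (S t) (C t)))
  (h0 : inD K1 K2 (Ktilde3 b3 d3 eta K1 K2 K3) (H 0) (S 0) (C 0)) :
  forall t, 0 <= t < b ->
    inD K1 K2 (Ktilde3 b3 d3 eta K1 K2 K3) (H t) (S t) (C t).
Proof.
  intros T [HT0 HTb].
  destruct (Req_dec T 0) as [-> | HT]; [exact h0 |].
  set (Kt := Ktilde3 b3 d3 eta K1 K2 K3) in *.
  destruct (derivable_bounded_on_segment H _ a b 0 T ha HT0 HTb
    (fun u Hu => proj1 (hode u Hu))) as [MH HMH].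
  destruct (derivable_bounded_on_segment S _ a b 0 T ha HT0 HTb
    (fun u Hu => proj1 (proj2 (hode u Hu)))) as [MS HMS].
  destruct (derivable_bounded_on_segment C _ a b 0 T ha HT0 HTb
    (fun u Hu => proj2 (proj2 (hode u Hu)))) as [MC HMC].
  pose proof (HMH 0 ltac:(lra)); pose proof (HMS 0 ltac:(lra)); pose proof (HMC 0 ltac:(lra)).
  set (M := K1 + K2 + MH + MS + MC).
  apply box_penalty_le0_iff_inD.
  apply (Gronwall_nonpos (fun u => box_penalty K1 K2 Kt (H u) (S u) (C u))
    (fun u => box_penalty_rate K1 K2 Kt (H u) (S u) (C u)
       (fH d1 eta m1 K1 (H u) (S u) (C u)) (fS b2 d2 eta m2 K2 (H u) (S u) (C u))
       (fC b3 d3 eta K3 (H u) (S u) (C u)))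
    (12 * lichen_rate_bound b2 b3 m1 m2 eta K1 K2 K3 M) 0 T); [lra | | | ].
  - intros u Hu; destruct (hode u ltac:(lra)) as (HdH & HdS & HdC).
    exact (derivable_pt_lim_box_penalty K1 K2 Kt H S C u _ _ _ HdH HdS HdC).
  - intros u Hu.
    pose proof (HMH u Hu); pose proof (HMS u Hu); pose proof (HMC u Hu).
    apply lichen_penalty_rate_le; unfold M; lra.
  - apply box_penalty_le0_iff_inD; exact h0.
Qed.
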